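(* Let $\Gamma$ and $G$ be groups and suppose the projection $\mathrm{pr}\colon\Gamma\wr G\to G$ factors as $\Gamma\wr G\xrightarrow{p}H\xrightarrow{r}G$ with $p,r$ surjective homomorphisms. Let $H_1,H_2$ be normal subgroups of $H$ and write $G_i=r(H_i)$. Assume $G_1\neq1$, $G_2\neq1$, $G=G_1\times G_2$, and $[H_1,H_2]=1$. Then $\mathrm{Ker}(p)\subseteq\Gamma^G$ surjects onto $\Gamma$ under the evaluation map $e_1\colon f\mapsto f(1)$.
   Context: The wreath product is $\Gamma\wr G=\Gamma^G\rtimes G$, where $\Gamma^G$ is the group of all functions $f\colon G\to\Gamma$ and $G$ acts from the right by $f^h(g)=f(hg)$. $\mathrm{pr}\colon\Gamma\wr G\to G$, $(f,g)\mapsto g$, and $e_g\colon\Gamma^G\to\Gamma$, $f\mapsto f(g)$. *)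

From Stdlib Require Import FunctionalExtensionality.

Record group := Group {
  carrier :> Type;
  gmul : carrier -> carrier -> carrier;
  gone : carrier;
  ginv : carrier -> carrier;
  gmulA : forall x y z, gmul x (gmul y z) = gmul (gmul x y) z;
  gmul1l : forall x, gmul gone x = x;
  gmul1r : forall x, gmul x gone = x;
  gmulVl : forall x, gmul (ginv x) x = gone;
  gmulVr : forall x, gmul x (ginv x) = gone
}.

Arguments gmul {g}.
Arguments gone {g}.
Arguments ginv {g}.

Definition is_hom (A B : group) (f : A -> B) : Prop :=
  forall x y : A, f (gmul x y) = gmul (f x) (f y).

Definition surjective {A B : Type} (f : A -> B) : Prop :=
  forall b, exists a, f a = b.

Definition is_subgroup (A : group) (S : A -> Prop) : Prop :=
  S gone /\ (forall x y, S x -> S y -> S (gmul x y)) /\ (forall x, S x -> S (ginv x)).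

Definition is_normal (A : group) (S : A -> Prop) : Prop :=
  is_subgroup A S /\ (forall x g, S x -> S (gmul (ginv g) (gmul x g))).

Definition image {A B : Type} (f : A -> B) (S : A -> Prop) : B -> Prop :=
  fun b => exists a, S a /\ f a = b.

Definition is_trivial (A : group) (S : A -> Prop) : Prop :=
  forall x, S x <-> x = gone.

Definition internal_direct_product (A : group) (S1 S2 : A -> Prop) : Prop :=
  is_normal A S1 /\ is_normal A S2 /\
  (forall x, S1 x -> S2 x -> x = gone) /\
  (forall g : A, exists x y, S1 x /\ S2 y /\ g = gmul x y).

Definition commutator_trivial (A : group) (S1 S2 : A -> Prop) : Prop :=
  forall x y, S1 x -> S2 y ->
    gmul (gmul (ginv x) (ginv y)) (gmul x y) = gone.

(** Wreath product  Γ ≀ G = Γ^G ⋊ G  with the right action  f^h(g) = f(h g):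
    (f1, g1) (f2, g2) = (f1^{g2} f2, g1 g2). *)
Section Wreath.
Variables (Gam G : group).

Definition wr_car := ((G -> Gam) * G)%type.

Definition wr_mul (a b : wr_car) : wr_car :=
  (fun x => gmul (fst a (gmul (snd b) x)) (fst b x), gmul (snd a) (snd b)).

Definition wr_one : wr_car := (fun _ => gone, gone).

Definition wr_inv (a : wr_car) : wr_car :=
  (fun x => ginv (fst a (gmul (ginv (snd a)) x)), ginv (snd a)).

Lemma wr_mulA x y z : wr_mul x (wr_mul y z) = wr_mul (wr_mul x y) z.
Proof.
  destruct x as [f1 g1], y as [f2 g2], z as [f3 g3]; unfold wr_mul; simpl.
  f_equal; [|apply gmulA]. apply functional_extensionality; intro x.
  rewrite !gmulA. reflexivity.
Qed.

Lemma wr_mul1l x : wr_mul wr_one x = x.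
Proof.
  destruct x as [f g]; unfold wr_mul; simpl. f_equal; [|apply gmul1l].
  apply functional_extensionality; intro x. apply gmul1l.
Qed.

Lemma wr_mul1r x : wr_mul x wr_one = x.
Proof.
  destruct x as [f g]; unfold wr_mul; simpl. f_equal; [|apply gmul1r].
  apply functional_extensionality; intro x. rewrite gmul1r, gmul1l. reflexivity.
Qed.

Lemma wr_mulVl x : wr_mul (wr_inv x) x = wr_one.
Proof.
  destruct x as [f g]; unfold wr_mul, wr_inv, wr_one; simpl. f_equal; [|apply gmulVl].
  apply functional_extensionality; intro x.
  rewrite gmulA, gmulVl, gmul1l. apply gmulVl.
Qed.

Lemma wr_mulVr x : wr_mul x (wr_inv x) = wr_one.
Proof.
  destruct x as [f g]; unfold wr_mul, wr_inv, wr_one; simpl. f_equal; [|apply gmulVr].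
  apply functional_extensionality; intro x.
  apply gmulVr.
Qed.

Definition wreath : group :=
  Group wr_car wr_mul wr_one wr_inv wr_mulA wr_mul1l wr_mul1r wr_mulVl wr_mulVr.

Definition wr_pr (a : wreath) : G := snd a.

Definition wr_base (f : G -> Gam) : wreath := (f, gone).

End Wreath.

(** Choose [g1 <> 1] in [G1] and [g2 <> 1] in [G2] and lift them to [w1], [w2]
    in the wreath product with [p w1] in [H1] and [p w2] in [H2]. For a base
    element [u], the double commutator [[u, w1], w2] is again a base element;
    since [H1] is normal, [p [u, w1]] lies in [H1], so [p [[u, w1], w2]] lies
    in [[H1, H2] = 1]. If [u] is supported at the single point [g1 g2], which
    differs from [1], [g1] and [g2] because [G1] and [G2] meet trivially, then
    the value of [[u, w1], w2] at [1] is a conjugate of [u (g1 g2)], hence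
    arbitrary. *)

From Stdlib Require Import FunctionalExtensionality Classical ClassicalEpsilon.

Definition conjg {A : group} (x y : A) : A := gmul (ginv y) (gmul x y).

Definition comm {A : group} (x y : A) : A :=
  gmul (gmul (ginv x) (ginv y)) (gmul x y).

Section GroupFacts.
Variable A : group.
Implicit Types x y z : A.

Lemma mulgI x y z : gmul x y = gmul x z -> y = z.
Proof.
  intro E.
  rewrite <- (gmul1l A y), <- (gmul1l A z), <- (gmulVl A x), <- !gmulA, E.
  reflexivity.
Qed.

Lemma mulIg x y z : gmul y x = gmul z x -> y = z.
Proof.
  intro E.
  rewrite <- (gmul1r A y), <- (gmul1r A z), <- (gmulVr A x), !gmulA, E.
  reflexivity.
Qed.

Lemma mulg_eq1 x y : gmul x y = gone -> x = ginv y.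
Proof. intro E. apply (mulIg y). rewrite E, gmulVl. reflexivity. Qed.

Lemma invg1 : ginv (@gone A) = gone.
Proof. symmetry. apply mulg_eq1, gmul1l. Qed.

Lemma conj1g y : conjg gone y = gone.
Proof. unfold conjg. rewrite gmul1l. apply gmulVl. Qed.

Lemma invgM x y : ginv (gmul x y) = gmul (ginv y) (ginv x).
Proof.
  symmetry. apply mulg_eq1.
  rewrite <- gmulA, (gmulA _ (ginv x)), gmulVl, gmul1l. apply gmulVl.
Qed.

Lemma conjgM x y z : conjg x (gmul y z) = conjg (conjg x y) z.
Proof. unfold conjg. rewrite invgM, !gmulA. reflexivity. Qed.

Lemma conjg_mulKV x y : conjg (gmul y (gmul x (ginv y))) y = x.
Proof.
  unfold conjg. rewrite !gmulA, gmulVl, gmul1l, <- gmulA, gmulVl. apply gmul1r.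
Qed.

Lemma comm_conjg x y : comm x y = gmul (conjg (ginv y) x) y.
Proof. unfold comm, conjg. rewrite !gmulA. reflexivity. Qed.

Lemma normal_comm (S : A -> Prop) x y : is_normal A S -> S y -> S (comm x y).
Proof.
  intros [[_ [mulS invS]] conjS] Sy. rewrite comm_conjg.
  apply mulS; [apply conjS, invS|]; exact Sy.
Qed.

Lemma nontrivial_subgroup_elem (S : A -> Prop) :
  is_subgroup A S -> ~ is_trivial A S -> exists x, S x /\ x <> gone.
Proof.
  intros [S1 _] nt. apply NNPP. intro none. apply nt. intro x. split.
  - intro Sx. apply NNPP. intro ne. apply none. exists x. auto.
  - intros ->. exact S1.
Qed.

Lemma disjoint_mul_neq (S1 S2 : A -> Prop) x y :
  is_subgroup A S2 -> (forall z, S1 z -> S2 z -> z = gone) ->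
  S1 x -> S2 y -> x <> gone -> y <> gone ->
  gmul x y <> gone /\ gmul x y <> x /\ gmul x y <> y.
Proof.
  intros [_ [_ invS2]] disj S1x S2y x1 y1. repeat split.
  - intro E. apply x1, disj; [exact S1x|]. rewrite (mulg_eq1 _ _ E). apply invS2, S2y.
  - intro E. apply y1, (mulgI x). rewrite E, gmul1r. reflexivity.
  - intro E. apply x1, (mulIg y). rewrite E, gmul1l. reflexivity.
Qed.

End GroupFacts.

Arguments mulgI {A} x {y z}.
Arguments mulIg {A} x {y z}.
Arguments mulg_eq1 {A x y}.
Arguments nontrivial_subgroup_elem {A S}.
Arguments disjoint_mul_neq {A S1 S2 x y}.

Section Homomorphisms.
Variables (A B : group) (f : A -> B).
Hypothesis hf : is_hom A B f.

Lemma hom_one : f gone = gone.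
Proof. apply (mulgI (f gone)). rewrite <- hf, !gmul1r. reflexivity. Qed.

Lemma hom_inv x : f (ginv x) = ginv (f x).
Proof. apply mulg_eq1. rewrite <- hf, gmulVl. exact hom_one. Qed.

Lemma hom_comm x y : f (comm x y) = comm (f x) (f y).
Proof. unfold comm. rewrite !hf, !hom_inv. reflexivity. Qed.

Lemma hom_double_comm_trivial (S1 S2 : B -> Prop) u w1 w2 :
  is_normal B S1 -> commutator_trivial B S1 S2 ->
  S1 (f w1) -> S2 (f w2) -> f (comm (comm u w1) w2) = gone.
Proof.
  intros nS1 cS S1w1 S2w2. rewrite !hom_comm.
  apply cS; [apply normal_comm|]; assumption.
Qed.

End Homomorphisms.

Arguments hom_double_comm_trivial {A B f} hf {S1 S2} u {w1 w2}.

Section WreathCommutators.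
Variables Gam G : group.

Definition point_fun (t : G) (d : Gam) : G -> Gam :=
  fun x => if excluded_middle_informative (x = t) then d else gone.

Lemma point_fun_at t d : point_fun t d t = d.
Proof.
  unfold point_fun. destruct (excluded_middle_informative (t = t)) as [_|n].
  - reflexivity.
  - contradiction n. reflexivity.
Qed.

Lemma point_fun_off t d x : x <> t -> point_fun t d x = gone.
Proof.
  intro n. unfold point_fun.
  destruct (excluded_middle_informative (x = t)); [contradiction|reflexivity].
Qed.

Definition wr_comm_fun (phi a : G -> Gam) (g : G) : G -> Gam :=
  fun x => gmul (ginv (phi x)) (conjg (phi (gmul g x)) (a x)).

Lemma wr_comm_base (phi a : G -> Gam) (g : G) :
  comm (wr_base Gam G phi) ((a, g) : wreath Gam G)
  = wr_base Gam G (wr_comm_fun phi a g).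
Proof.
  unfold comm, wr_base, wr_comm_fun, conjg; simpl; unfold wr_mul, wr_inv; simpl.
  rewrite !invg1, !gmul1l. f_equal.
  - apply functional_extensionality; intro x.
    rewrite (gmulA _ (ginv g)), gmulVl, !gmul1l, !gmulA. reflexivity.
  - apply gmulVl.
Qed.

Lemma wr_double_comm_point_one (a b : G -> Gam) (g1 g2 : G) (d : Gam) :
  gmul g1 g2 <> gone -> gmul g1 g2 <> g1 -> gmul g1 g2 <> g2 ->
  wr_comm_fun (wr_comm_fun (point_fun (gmul g1 g2) d) a g1) b g2 gone
  = conjg (conjg d (a g2)) (b gone).
Proof.
  intros t1 tg1 tg2.
  assert (inner1 : wr_comm_fun (point_fun (gmul g1 g2) d) a g1 gone = gone).
  { unfold wr_comm_fun. rewrite gmul1r, !point_fun_off by congruence.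
    rewrite invg1, gmul1l. apply conj1g. }
  assert (inner2 : wr_comm_fun (point_fun (gmul g1 g2) d) a g1 g2 = conjg d (a g2)).
  { unfold wr_comm_fun. rewrite point_fun_at, point_fun_off by congruence.
    rewrite invg1. apply gmul1l. }
  unfold wr_comm_fun at 1. rewrite gmul1r, inner1, inner2, invg1. apply gmul1l.
Qed.

Lemma wr_lift (H : group) (p : wreath Gam G -> H) (r : H -> G)
  (sp : surjective p) (hfac : forall w, r (p w) = wr_pr Gam G w)
  (S : H -> Prop) (g : G) :
  image r S g -> exists a : G -> Gam, S (p ((a, g) : wreath Gam G)).
Proof.
  intros [h [Sh rh]]. destruct (sp h) as [[a g'] pw]. exists a.
  replace g with g'; [rewrite pw; exact Sh|].
  rewrite <- rh, <- pw, hfac. reflexivity.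
Qed.

End WreathCommutators.

Arguments point_fun {Gam G}.
Arguments wr_comm_fun {Gam G}.
Arguments wr_lift {Gam G H p r} sp hfac {S g}.

Theorem lemma5p3 (Gam G H : group)
  (p : wreath Gam G -> H) (r : H -> G)
  (hp : is_hom (wreath Gam G) H p) (hr : is_hom H G r)
  (sp : surjective p) (sr : surjective r)
  (hfac : forall w : wreath Gam G, r (p w) = wr_pr Gam G w)
  (H1 H2 : H -> Prop) (nH1 : is_normal H H1) (nH2 : is_normal H H2)
  (G1ne : ~ is_trivial G (image r H1)) (G2ne : ~ is_trivial G (image r H2))
  (hdp : internal_direct_product G (image r H1) (image r H2))
  (hcomm : commutator_trivial H H1 H2) :
  forall gam : Gam, exists f : G -> Gam,
    p (wr_base Gam G f) = gone /\ f gone = gam.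
Proof.
  intro gam.
  destruct hdp as [[sG1 _] [[sG2 _] [disj _]]].
  destruct (nontrivial_subgroup_elem sG1 G1ne) as [g1 [G1g1 g1ne]].
  destruct (nontrivial_subgroup_elem sG2 G2ne) as [g2 [G2g2 g2ne]].
  destruct (wr_lift sp hfac G1g1) as [a H1a].
  destruct (wr_lift sp hfac G2g2) as [b H2b].
  destruct (disjoint_mul_neq sG2 disj G1g1 G2g2 g1ne g2ne) as [t1 [tg1 tg2]].
  set (y := gmul (a g2) (b gone)).
  set (phi := point_fun (gmul g1 g2) (gmul y (gmul gam (ginv y)))).
  exists (wr_comm_fun (wr_comm_fun phi a g1) b g2). split.
  - rewrite <- (hom_double_comm_trivial hp (wr_base Gam G phi) nH1 hcomm H1a H2b).
    rewrite !wr_comm_base. reflexivity.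
  - unfold phi. rewrite wr_double_comm_point_one by assumption.
    rewrite <- conjgM. apply conjg_mulKV.
Qed.
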